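(* Let $n$, $r$, $a$ be positive integers with $n=2r+1$ and $a\ge 2$. Then $$\rho_2(K(n+2a,r+a))\ \ge\ 2\,\rho_2(K(n,r)).$$
   Context: For integers $n\ge 2r$, the Kneser graph $K(n,r)$ has as vertices the $r$-element subsets of $[n]=\{1,\dots,n\}$, two vertices being adjacent iff they are disjoint. A $2$-packing of a graph $G$ is a set of vertices pairwise at distance at least $3$ in $G$; $\rho_2(G)$ is the maximum cardinality of a $2$-packing. *)

From mathcomp Require Import all_boot all_order.
Set Implicit Arguments. Unset Strict Implicit. Unset Printing Implicit Defensive.

Definition kneser_vertex (n r : nat) (A : {set 'I_n}) : bool := #|A| == r.

Definition kneser_adj (n r : nat) (A B : {set 'I_n}) : bool :=
  [&& kneser_vertex r A, kneser_vertex r B & [disjoint A & B]].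

(* distance at least 3 in K(n,r) between distinct vertices u, v:
   not adjacent and no common neighbour. *)
Definition kneser_far (n r : nat) (A B : {set 'I_n}) : bool :=
  ~~ kneser_adj r A B &&
  [forall C : {set 'I_n}, ~~ (kneser_adj r A C && kneser_adj r C B)].

Definition two_packing (n r : nat) (P : {set {set 'I_n}}) : bool :=
  [forall A in P, kneser_vertex r A] &&
  [forall A in P, forall B in P, (A != B) ==> kneser_far r A B].

Definition rho2_kneser (n r : nat) : nat :=
  \max_(P : {set {set 'I_n}} | two_packing r P) #|P|.

(* Two R-sets of K(N,R) meeting in t points are at distance at least 3 iff
   0 < t (they are not adjacent) and t + N < 3R (fewer than R points lie
   outside their union, so no common neighbour exists).  Split the 2a new
   points into halves X and Y and send a maximum 2-packing P of K(2r+1,r) to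
   the sets A ∪ X and A ∪ Y, A in P.  A shared half raises both t and
   3R - N by a; sets with different halves meet in A ∩ B, which is nonempty
   because P is intersecting, and has at most r points, few enough once a >= 2. *)

From mathcomp Require Import all_boot all_order.
From mathcomp Require Import zify.

Set Implicit Arguments.
Unset Strict Implicit.
Unset Printing Implicit Defensive.

Lemma exists_subset_card (T : finType) (B : {set T}) k :
  k <= #|B| -> exists2 A : {set T}, A \subset B & #|A| = k.
Proof.
rewrite -bin_gt0 -cards_draws card_gt0 => /set0Pn [A].
by rewrite inE => /andP [sAB /eqP]; exists A.
Qed.

Section KneserDistance.

Variables N R : nat.
Implicit Types A B C : {set 'I_N}.

Lemma kneser_adjE A B :
  #|A| = R -> #|B| = R -> kneser_adj R A B = [disjoint A & B].
Proof. by move=> cA cB; rewrite /kneser_adj /kneser_vertex cA cB eqxx. Qed.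

Lemma kneser_common_neighbourP A B : #|A| = R -> #|B| = R ->
  reflect (exists C, kneser_adj R A C && kneser_adj R C B) (R + #|A :|: B| <= N).
Proof.
move=> cA cB.
have adj_bothE C : kneser_adj R A C && kneser_adj R C B =
    (#|C| == R) && (C \subset ~: (A :|: B)).
  rewrite /kneser_adj /kneser_vertex cA cB setCU subsetI -!disjoints_subset.
  by rewrite [[disjoint A & C]]disjoint_sym eqxx; case: (#|C| == R).
have cC : #|~: (A :|: B)| = N - #|A :|: B|.
  by rewrite cardsCs setCK card_ord.
apply: (iffP idP) => [le_RN | [C]].
  have [|C sC cCR] := @exists_subset_card _ (~: (A :|: B)) R; first by rewrite cC; lia.
  by exists C; rewrite adj_bothE cCR eqxx.
rewrite adj_bothE => /andP [/eqP <- /subset_leq_card].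
rewrite cC; have := subset_leq_card (subsetT (A :|: B)); rewrite cardsT card_ord; lia.
Qed.

Lemma kneser_farE A B : #|A| = R -> #|B| = R ->
  kneser_far R A B = (0 < #|A :&: B|) && (#|A :&: B| + N < 3 * R).
Proof.
move=> cA cB; rewrite /kneser_far kneser_adjE // -setI_eq0 -card_gt0.
rewrite -negb_exists; congr (_ && _).
rewrite (sameP existsP (kneser_common_neighbourP cA cB)) -ltnNge.
have := cardsUI A B; rewrite cA cB => UI; apply/idP/idP; lia.
Qed.

End KneserDistance.

Lemma two_packingP n r (P : {set {set 'I_n}}) :
  reflect ({in P, forall A : {set 'I_n}, #|A| = r} /\
           {in P &, forall A B : {set 'I_n}, A != B -> kneser_far r A B})
          (two_packing r P).
Proof.
apply: (iffP andP) => [[/forall_inP cP /forall_inP farP] | [cP farP]]; split.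
- by move=> A /cP /eqP.
- by move=> A B /farP /forall_inP farA /farA /implyP.
- by apply/forall_inP => A /cP /eqP.
- apply/forall_inP => A AP; apply/forall_inP => B BP; apply/implyP; exact: farP.
Qed.

Lemma rho2_kneser_attained n r :
  exists2 P : {set {set 'I_n}}, two_packing r P & rho2_kneser n r = #|P|.
Proof.
have [|P] := eq_bigmax_cond (fun P : {set {set 'I_n}} => #|P|) (A := two_packing r).
  apply/card_gt0P; exists set0; rewrite unfold_in.
  by apply/two_packingP; split=> ?; rewrite inE.
by exists P.
Qed.

Section Glue.

Variables n m : nat.
Implicit Types (A B : {set 'I_n}) (E F : {set 'I_m}).

Definition glue A E : {set 'I_(n + m)} := @lshift n m @: A :|: @rshift n m @: E.

Lemma mem_glue_lshift A E i : (lshift m i \in glue A E) = (i \in A).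
Proof.
rewrite inE (mem_imset _ _ (@lshift_inj _ _)).
by case: (i \in A) => //=; apply/imsetP => [[j _ /eqP]]; rewrite eq_lrshift.
Qed.

Lemma mem_glue_rshift A E j : (rshift n j \in glue A E) = (j \in E).
Proof.
rewrite inE (mem_imset _ _ (@rshift_inj _ _)) orbC.
by case: (j \in E) => //=; apply/imsetP => [[i _ /eqP]]; rewrite eq_rlshift.
Qed.

Lemma glue_uncurry_inj : injective (uncurry glue).
Proof.
move=> [A E] [B F] /= eqAE; congr pair; apply/setP.
  by move=> i; rewrite -(mem_glue_lshift A E) eqAE mem_glue_lshift.
by move=> j; rewrite -(mem_glue_rshift A E) eqAE mem_glue_rshift.
Qed.

Lemma setI_glue A B E F : glue A E :&: glue B F = glue (A :&: B) (E :&: F).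
Proof.
apply/setP => x; rewrite -[x]splitK; case: (split x) => y /=.
  by rewrite inE !mem_glue_lshift inE.
by rewrite inE !mem_glue_rshift inE.
Qed.

Lemma card_glue A E : #|glue A E| = #|A| + #|E|.
Proof.
rewrite cardsU (card_imset _ (@lshift_inj _ _)) (card_imset _ (@rshift_inj _ _)).
suff -> : @lshift n m @: A :&: @rshift n m @: E = set0 by rewrite cards0 subn0.
apply/setP => x; rewrite !inE; apply/andP => [[/imsetP [i _ ->] /imsetP [j _ /eqP]]].
by rewrite eq_lrshift.
Qed.

End Glue.

Lemma two_packing_setI n r (P : {set {set 'I_n}}) A B :
    0 < r -> two_packing r P -> A \in P -> B \in P ->
  0 < #|A :&: B| <= r /\ (A != B -> #|A :&: B| + n < 3 * r).
Proof.
move=> r_gt0 /two_packingP [cP farP] AP BP.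
have le_r : #|A :&: B| <= r by rewrite -(cP A AP) subset_leq_card ?subsetIl.
have farAB : A != B -> (0 < #|A :&: B|) && (#|A :&: B| + n < 3 * r).
  by move/(farP A B AP BP); rewrite (kneser_farE (cP A AP) (cP B BP)).
split=> [|/farAB /andP [] //]; rewrite le_r andbT.
by have [<-|/farAB /andP [] //] := eqVneq A B; rewrite setIid cP.
Qed.

Lemma two_packing_glue n m r a (P : {set {set 'I_n}}) (S : {set {set 'I_m}}) :
    0 < r -> m <= 2 * a -> n + m < 2 * r + 3 * a ->
    {in S, forall E : {set 'I_m}, #|E| = a} ->
    {in S &, forall E F : {set 'I_m}, E != F -> E :&: F = set0} ->
  two_packing r P -> two_packing (r + a) [set glue A E | A in P, E in S].
Proof.
move=> r_gt0 le_m2a lt_nm cS disjS packP.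
move/two_packingP: (packP) => [cP _].
apply/two_packingP; split.
  by move=> _ /imset2P [A E AP ES ->]; rewrite card_glue cP ?cS.
move=> _ _ /imset2P [A E AP ES ->] /imset2P [B F BP FS ->] neq.
rewrite kneser_farE ?card_glue ?cP ?cS // setI_glue card_glue.
have [/andP [AB_gt0 AB_le] farAB] := two_packing_setI r_gt0 packP AP BP.
have [eqEF | neqEF] := eqVneq E F.
  have neqAB : A != B by apply: contraNneq neq => ->; rewrite eqEF.
  have := farAB neqAB; rewrite -eqEF setIid cS // => lt_n3r.
  apply/andP; split; lia.
rewrite disjS // cards0 addn0; apply/andP; split; lia.
Qed.

Lemma rho2_kneser_double n r a : 0 < r -> 0 < a -> n < 2 * r + a ->
  2 * rho2_kneser n r <= rho2_kneser (n + 2 * a) (r + a).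
Proof.
move=> r_gt0 a_gt0 lt_n.
have [P packP ->] := rho2_kneser_attained n r.
have [X _ cX] : exists2 X : {set 'I_(2 * a)}, X \subset setT & #|X| = a.
  by apply: exists_subset_card; rewrite cardsT card_ord; lia.
have cXC : #|~: X| = a by have := cardsC X; rewrite card_ord; lia.
have neqX : X != ~: X.
  apply/eqP => eqX; have := setICr X; rewrite {1}eqX setIid => /eqP.
  by rewrite -cards_eq0 cXC; lia.
pose S : {set {set 'I_(2 * a)}} := [set X; ~: X].
have cS : {in S, forall E : {set 'I_(2 * a)}, #|E| = a} by move=> E /set2P [] ->.
have disjS : {in S &, forall E F : {set 'I_(2 * a)}, E != F -> E :&: F = set0}.
  move=> E F /set2P [] -> /set2P [] ->; rewrite ?eqxx // => _;
  by rewrite ?setICr // setIC setICr.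
have packQ := two_packing_glue r_gt0 (leqnn _) _ cS disjS packP.
rewrite /rho2_kneser; apply: leq_trans (leq_bigmax_cond _ (packQ _)); last lia.
rewrite curry_imset2X card_imset ?cardsX; last exact: glue_uncurry_inj.
by rewrite cards2 neqX mulnC.
Qed.

Theorem proposition4p3 (n r a : nat) :
  0 < n -> 0 < r -> 0 < a -> n = 2 * r + 1 -> 2 <= a ->
  2 * rho2_kneser n r <= rho2_kneser (n + 2 * a) (r + a).
Proof. by move=> _ r_gt0 a_gt0 -> a_ge2; apply: rho2_kneser_double => //; lia. Qed.
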